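(* Let $\lambda\in[-1,1)$ and let $\gamma:I\to\mathbb{R}^d$ be a $\lambda$-eel. Then for every $t_1\in I$, the function $t\mapsto\|\gamma(t_1)-\gamma(t)\|+\lambda\,\ell(\gamma|_{[t_1,t]})$ is non-decreasing on $I\cap[t_1,\infty)$.
   Context: $\mathbb{R}^d$ carries the Euclidean inner product $\langle\cdot,\cdot\rangle$ and norm $\|\cdot\|$; $I\subset\mathbb{R}$ is an interval. A $\lambda$-eel is a continuous curve $\gamma:I\to\mathbb{R}^d$ with a nonzero right derivative $\gamma'(\tau)$ at each point such that for all $t<\tau$ in $I$: $\langle\gamma'(\tau),\gamma(t)-\gamma(\tau)\rangle\le\lambda\|\gamma'(\tau)\|\|\gamma(t)-\gamma(\tau)\|$. $\ell(\gamma|_{[t_1,t]})$ is the length of the restriction, $\sup\sum\|\gamma(s_i)-\gamma(s_{i+1})\|$ over finite increasing sequences in $[t_1,t]$. *)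

From HB Require Import structures.
From mathcomp Require Import all_boot all_order all_algebra.
From mathcomp Require Import all_classical all_reals all_analysis.
Set Implicit Arguments. Unset Strict Implicit. Unset Printing Implicit Defensive.
Import Order.TTheory GRing.Theory Num.Theory.
Import numFieldNormedType.Exports.
Local Open Scope classical_set_scope.
Local Open Scope ring_scope.

(* Euclidean inner product and norm on R^d (the library norm on matrices is
   the sup norm, so we define the Euclidean ones explicitly). *)
Definition edot (R : realType) (d : nat) (u v : 'rV[R]_d) : R :=
  \sum_(i < d) u ord0 i * v ord0 i.

Definition enorm (R : realType) (d : nat) (u : 'rV[R]_d) : R :=
  Num.sqrt (edot u u).

Definition right_deriv (R : realType) (d : nat) (I : interval R)
    (gamma : R -> 'rV[R]_d) (tau : R) (v : 'rV[R]_d) : Prop :=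
  (fun h : R => h^-1 *: (gamma (tau + h) - gamma tau))
    @ within [set h : R | tau + h \in I] (0 : R)^'+ --> v.

Definition eel (R : realType) (d : nat) (lam : R) (I : interval R)
    (gamma : R -> 'rV[R]_d) : Prop :=
  {within [set` I], continuous gamma} /\
  exists gd : R -> 'rV[R]_d,
    forall tau, tau \in I ->
      [/\ right_deriv I gamma tau (gd tau), gd tau != 0 &
          forall t, t \in I -> t < tau ->
            edot (gd tau) (gamma t - gamma tau)
              <= lam * enorm (gd tau) * enorm (gamma t - gamma tau)].

Definition polylen (R : realType) (d : nat) (gamma : R -> 'rV[R]_d)
    (s : seq R) : R :=
  \sum_(i < (size s).-1) enorm (gamma (nth 0 s i) - gamma (nth 0 s i.+1)).

Definition curve_length (R : realType) (d : nat) (gamma : R -> 'rV[R]_d)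
    (a b : R) : \bar R :=
  ereal_sup [set (polylen gamma s)%:E | s in
     [set s : seq R | sorted <%R s /\ all (fun x => (a <= x) && (x <= b)) s]].

From HB Require Import structures.
From mathcomp Require Import all_boot all_order all_algebra.
From mathcomp Require Import all_classical all_reals all_analysis.
From mathcomp Require Import ring lra.
Import Order.TTheory GRing.Theory Num.Theory.
Import numFieldNormedType.Exports.
Local Open Scope classical_set_scope.
Local Open Scope ring_scope.

(* Write dist u = |gamma t1 - gamma u|.  At m >= t1, with v the right derivative
   and w = gamma t1 - gamma m, the eel inequality <v, w> <= lam |v| |w| gives
   |w - h v| >= |w| - h lam |v|, hence
     dist m - dist (m + h) <= lam |gamma m - gamma (m + h)| + o(h).
   Real induction on [a, b] (continuity of gamma handling left limits) turns
   this into: for t1 <= a <= b and e > 0, some chain from a to b satisfies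
   dist a - dist b <= lam * (its polygonal length) + e.
   For lam >= 0 this bounds dist s - dist t by lam * length[s, t].  For lam < 0,
   the two-point chain bound dist a - dist b <= lam |gamma a - gamma b| telescopes
   over any partition of [s, t] and bounds -lam * length[s, t] by dist t - dist s.
   Additivity length[t1, t] = length[t1, s] + length[s, t] concludes. *)

Section EuclideanSpace.
Context {R : realType} {d : nat}.
Implicit Types (x y z v w D : 'rV[R]_d) (c : R).

Lemma edotC x y : edot x y = edot y x.
Proof. by apply: eq_bigr => i _; rewrite mulrC. Qed.

Lemma edotDl x y z : edot (x + y) z = edot x z + edot y z.
Proof. by rewrite /edot -big_split; apply: eq_bigr => i _; rewrite mxE mulrDl. Qed.

Lemma edotDr x y z : edot x (y + z) = edot x y + edot x z.
Proof. by rewrite edotC edotDl !(edotC x). Qed.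

Lemma edotZl c x y : edot (c *: x) y = c * edot x y.
Proof. by rewrite /edot mulr_sumr; apply: eq_bigr => i _; rewrite mxE mulrA. Qed.

Lemma edotBl x y z : edot (x - y) z = edot x z - edot y z.
Proof. by rewrite edotDl -scaleN1r edotZl mulN1r. Qed.

Lemma edotZr c x y : edot x (c *: y) = c * edot x y.
Proof. by rewrite edotC edotZl edotC. Qed.

Lemma edot0r x : edot x 0 = 0.
Proof. by rewrite -(scale0r 0) edotZr mul0r. Qed.

Lemma edotBr x y z : edot x (y - z) = edot x y - edot x z.
Proof. by rewrite edotC edotBl !(edotC x). Qed.

Lemma edot_ge0 x : 0 <= edot x x.
Proof. by apply: sumr_ge0 => i _; rewrite -expr2 sqr_ge0. Qed.

Lemma edot_eq0 x : (edot x x == 0) = (x == 0).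
Proof.
apply/idP/eqP => [|->]; last by rewrite edot0r.
rewrite psumr_eq0 => [/allP x0|i _]; last by rewrite -expr2 sqr_ge0.
apply/rowP => i; have /implyP/(_ isT) := x0 i (mem_index_enum _).
by rewrite mulf_eq0 orbb mxE => /eqP.
Qed.

Lemma cauchy_schwarz_sqr x y : edot x y ^+ 2 <= edot x x * edot y y.
Proof.
have [->|y0] := eqVneq y 0.
  by rewrite !edot0r expr0n mulr0.
have yy0 : 0 < edot y y by rewrite lt_def edot_eq0 y0 edot_ge0.
have := edot_ge0 (edot y y *: x - edot x y *: y).
rewrite !(edotBl, edotBr, edotZl, edotZr) (edotC y x).
set a := edot x x; set b := edot y y; set c := edot x y.
have -> : b * (b * a - c * c) - c * (b * c - c * b) = b * (a * b - c ^+ 2) by ring.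
by rewrite pmulr_rge0 // subr_ge0.
Qed.

Lemma enorm_ge0 x : 0 <= enorm x.
Proof. exact: sqrtr_ge0. Qed.

Lemma enorm_sqr x : enorm x ^+ 2 = edot x x.
Proof. by rewrite sqr_sqrtr // edot_ge0. Qed.

Lemma cauchy_schwarz x y : edot x y <= enorm x * enorm y.
Proof.
rewrite -sqrtrM ?edot_ge0 // (le_trans (ler_norm _)) //.
by rewrite -sqrtr_sqr ler_sqrt ?cauchy_schwarz_sqr // mulr_ge0 ?edot_ge0.
Qed.

Lemma enormZ c x : enorm (c *: x) = `|c| * enorm x.
Proof. by rewrite /enorm edotZl edotZr mulrA -expr2 sqrtrM ?sqr_ge0 ?sqrtr_sqr. Qed.

Lemma enormN x : enorm (- x) = enorm x.
Proof. by rewrite -scaleN1r enormZ normrN1 mul1r. Qed.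

Lemma enorm_distC x y : enorm (x - y) = enorm (y - x).
Proof. by rewrite -enormN opprB. Qed.

Lemma enorm0 : enorm (0 : 'rV[R]_d) = 0.
Proof. by rewrite -(scale0r 0) enormZ normr0 mul0r. Qed.

Lemma ler_enormD x y : enorm (x + y) <= enorm x + enorm y.
Proof.
rewrite -(@ler_pXn2r _ 2) ?nnegrE ?addr_ge0 ?enorm_ge0 //.
rewrite enorm_sqr edotDl !edotDr (edotC y x) sqrrD !enorm_sqr.
have := cauchy_schwarz x y; lra.
Qed.

Lemma lerB_enorm x y : enorm x - enorm y <= enorm (x - y).
Proof. by rewrite lerBlDr (le_trans _ (ler_enormD _ _)) // subrK. Qed.

Lemma enorm_le_mx_norm x : enorm x <= d%:R * `|x|.
Proof.
have x0 : 0 <= `|x| by [].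
rewrite -[leRHS]ger0_norm ?mulr_ge0 // -sqrtr_sqr ler_sqrt ?sqr_ge0 //.
apply: (@le_trans _ _ (\sum_(i < d) `|x| ^+ 2)).
  apply: ler_sum => i _; rewrite -expr2 -real_normK ?num_real //.
  rewrite lerXn2r ?nnegrE // [leRHS]mx_normrE.
  exact: le_trans _ (le_bigmax _ _ (ord0, i)).
rewrite sumr_const card_ord -(mulr_natl (`|x| ^+ 2)) exprMn.
apply: ler_wpM2r; first exact: sqr_ge0.
by case: d => [|n]; rewrite ?expr0n // expr2 ler_peMl // ler1n.
Qed.

Lemma enorm_le_of_mx_norm x e :
  `|x| < e / (d%:R + 1) -> enorm x <= e.
Proof.
move=> xe; have d1 : 0 < d%:R + 1 :> R by rewrite ltr_wpDl.
rewrite ltr_pdivlMr // in xe; apply: le_trans (enorm_le_mx_norm x) _.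
have := normr_ge0 x; nra.
Qed.

Lemma enorm_subZ_ge (lam h : R) v w : -1 <= lam -> 0 <= h ->
  edot v w <= lam * enorm v * enorm w ->
  enorm w - h * lam * enorm v <= enorm (w - h *: v).
Proof.
move=> lam_ge h0 vw_le; have hv0 : 0 <= h * enorm v by rewrite mulr_ge0 ?enorm_ge0.
have [w0|w0] := eqVneq (enorm w) 0.
  have := lerB_enorm (h *: v) w.
  rewrite w0 enormZ ger0_norm // enorm_distC subr0.
  have : 0 <= (1 + lam) * (h * enorm v) by rewrite mulr_ge0 // -lerBlDl sub0r.
  lra.
have wpos : 0 < enorm w by rewrite lt_def w0 enorm_ge0.
have cs := cauchy_schwarz w (w - h *: v).
rewrite edotBr edotZr -enorm_sqr (edotC w v) in cs.
have : h * edot v w <= h * (lam * enorm v * enorm w) by rewrite ler_wpM2l.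
move=> hvw; rewrite -(ler_pM2l wpos); lra.
Qed.

(* With v = gamma' m, w = gamma t1 - gamma m and D = gamma (m + h) - gamma m. *)
Lemma eel_step_estimate (lam h : R) v w D : -1 <= lam -> lam <= 1 -> 0 <= h ->
  edot v w <= lam * enorm v * enorm w ->
  enorm w - enorm (w - D) <= lam * enorm D + 2 * enorm (D - h *: v).
Proof.
move=> lam_ge lam_le h0 vw_le.
have := enorm_subZ_ge lam h v w lam_ge h0 vw_le.
have := lerB_enorm (w - h *: v) (D - h *: v).
rewrite opprB addrA subrK.
have hvD : `|h * enorm v - enorm D| <= enorm (D - h *: v).
  have := lerB_enorm D (h *: v); have := lerB_enorm (h *: v) D.
  rewrite enormZ ger0_norm // (enorm_distC (h *: v)) ler_norml; lra.
have : lam * (h * enorm v - enorm D) <= enorm (D - h *: v).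
  rewrite (le_trans (ler_norm _)) // normrM (le_trans _ hvD) // ler_piMl //.
  by rewrite ler_norml lam_le lam_ge.
lra.
Qed.

End EuclideanSpace.

Section SortedInsertion.
Context {R : realDomainType}.
Implicit Types (P : seq R) (x b : R).

Lemma sorted_rcons P b : sorted <=%R P -> all (<= b) P -> sorted <=%R (rcons P b).
Proof.
case: P => [|x P] // sP Pb; rewrite /= rcons_path [path _ _ _]sP.
exact: (allP Pb _ (mem_last x P)).
Qed.

Lemma path_le_last x P : path <=%R x P -> all (<= last x P) (x :: P).
Proof.
elim: P x => [|y P IH] x /=; first by rewrite lexx.
move=> /andP[xy /IH /andP[ylast yP]]; apply/and3P; split=> //.
exact: le_trans xy ylast.
Qed.

Lemma sorted_insert P b : sorted <=%R P ->
  exists lo hi, [/\ P = lo ++ hi, sorted <=%R (lo ++ b :: hi),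
                    all (<= b) lo & all (>= b) hi].
Proof.
elim: P => [|x P IH] sP; first by exists [::], [::].
have Px := order_path_min le_trans sP.
have [bx|xb] := leP b x.
  exists [::], (x :: P); split => //=; first by rewrite bx.
  by rewrite bx; apply: sub_all Px => y; apply: le_trans.
have [lo [hi [PE s_lohi lo_b hi_b]]] := IH (path_sorted sP).
exists (x :: lo), hi; split => //=; first by rewrite PE.
  rewrite path_min_sorted //; apply/allP => y.
  rewrite mem_cat inE orbCA => /orP[/eqP->|yP]; first exact: ltW.
  by apply: (allP Px); rewrite PE mem_cat.
by rewrite (ltW xb).
Qed.

End SortedInsertion.

Section PolygonalLength.
Context {R : realType} {d : nat} (gamma : R -> 'rV[R]_d).
Implicit Types (P Q : seq R) (x y : R).

Lemma polylen0 : polylen gamma [::] = 0.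
Proof. exact: big_ord0. Qed.

Lemma polylen1 x : polylen gamma [:: x] = 0.
Proof. exact: big_ord0. Qed.

Lemma polylen_cons2 x y Q :
  polylen gamma [:: x, y & Q] = enorm (gamma x - gamma y) + polylen gamma (y :: Q).
Proof. by rewrite /polylen big_ord_recl. Qed.

Lemma polylen_rcons x P y : polylen gamma (x :: rcons P y) =
  polylen gamma (x :: P) + enorm (gamma (last x P) - gamma y).
Proof.
elim: P x => [|z P IH] x /=; first by rewrite polylen_cons2 !polylen1 addr0 add0r.
by rewrite polylen_cons2 IH polylen_cons2 addrA.
Qed.

Lemma polylen_cat_cons P x Q :
  polylen gamma (P ++ x :: Q) = polylen gamma (rcons P x) + polylen gamma (x :: Q).
Proof.
elim: P => [|p P IH] /=; first by rewrite polylen1 add0r.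
case: P IH => [|p' P] IH /=; first by rewrite !polylen_cons2 polylen1 addr0.
by rewrite !polylen_cons2 IH addrA.
Qed.

Lemma polylen_insert P x Q : polylen gamma (P ++ Q) <= polylen gamma (P ++ x :: Q).
Proof.
rewrite polylen_cat_cons; case: P => [|p P].
  case: Q => [|y Q]; first by rewrite polylen0 polylen1 addr0.
  by rewrite polylen1 add0r polylen_cons2 lerDr enorm_ge0.
rewrite polylen_rcons; case: Q => [|y Q]; first by rewrite cats0 polylen1 addr0 lerDl enorm_ge0.
rewrite polylen_cat_cons polylen_rcons polylen_cons2 addrA lerD2r -addrA lerD2l.
by have := ler_enormD (gamma (last p P) - gamma x) (gamma x - gamma y); rewrite addrA subrK.
Qed.

Lemma chord_le_polylen x Q : enorm (gamma x - gamma (last x Q)) <= polylen gamma (x :: Q).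
Proof.
elim: Q x => [|y Q IH] x /=; first by rewrite subrr enorm0 polylen1.
rewrite polylen_cons2; apply: le_trans (lerD (lexx _) (IH y)).
by have := ler_enormD (gamma x - gamma y) (gamma y - gamma (last y Q)); rewrite addrA subrK.
Qed.

Lemma polylen_telescope (f : R -> R) (lam : R) (D : pred R) :
  {in D &, forall a b, a <= b -> f a - f b <= lam * enorm (gamma a - gamma b)} ->
  forall x Q, path <=%R x Q -> D x -> all D Q ->
  f x - f (last x Q) <= lam * polylen gamma (x :: Q).
Proof.
move=> fD x Q; elim: Q x => [|y Q IH] x /=; first by rewrite subrr polylen1 mulr0.
move=> /andP[xy pyQ] xD /andP[yD QD].
have := IH y pyQ yD QD; have := fD x y xD yD xy.
rewrite polylen_cons2 mulrDr; lra.
Qed.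

Lemma polylen_strict_subpath x Q : path <=%R x Q ->
  exists Q', [/\ path <%R x Q', {subset Q' <= Q} &
                 polylen gamma (x :: Q') = polylen gamma (x :: Q)].
Proof.
elim: Q x => [|y Q IH] x /=; first by exists [::].
move=> /andP[xy /IH[Q' [pQ' sQ' lQ']]].
have [exy|ne] := eqVneq x y.
  subst y; exists Q'; split => // [z /sQ' zQ|]; first by rewrite inE zQ orbT.
  by rewrite lQ' polylen_cons2 subrr enorm0 add0r.
exists (y :: Q'); split => [/=| z|]; first by rewrite lt_def eq_sym ne xy.
  by rewrite !inE => /orP[->//|/sQ' ->]; rewrite orbT.
by rewrite !polylen_cons2 lQ'.
Qed.

End PolygonalLength.

Section CurveLength.
Context {R : realType} {d : nat} (gamma : R -> 'rV[R]_d).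
Implicit Types (P Q : seq R) (a b c : R).

(* Repeated points add no length, so nondecreasing sequences may be used. *)
Lemma polylen_le_curve_length a b P : sorted <=%R P -> all (fun x => a <= x <= b) P ->
  ((polylen gamma P)%:E <= curve_length gamma a b)%E.
Proof.
case: P => [_ _|x Q /= pQ /andP[xab Qab]]; first by apply: ereal_sup_ubound; exists [::].
have [Q' [pQ' sQ' <-]] := polylen_strict_subpath gamma _ _ pQ.
apply: ereal_sup_ubound; exists (x :: Q') => //; split => //=.
by rewrite xab; apply/allP => y /sQ' /(allP Qab).
Qed.

Lemma curve_length_ge0 a b : (0 <= curve_length gamma a b)%E.
Proof. by have := polylen_le_curve_length a b [::] isT isT; rewrite polylen0. Qed.

Lemma curve_length_le a b M :
  (forall P, sorted <%R P -> all (fun x => a <= x <= b) P -> polylen gamma P <= M) ->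
  (curve_length gamma a b <= M%:E)%E.
Proof. by move=> PM; apply: ge_ereal_sup => _ [P [sP Pab] <-]; rewrite lee_fin PM. Qed.

Lemma curve_length_bounded a b M : (curve_length gamma a b <= M%:E)%E ->
  exists2 l, curve_length gamma a b = l%:E & l <= M.
Proof.
by have := curve_length_ge0 a b; case: (curve_length gamma a b) => // l _ lM; exists l.
Qed.

Lemma curve_length_le_add a b c : a <= b -> b <= c ->
  (curve_length gamma a c <= curve_length gamma a b + curve_length gamma b c)%E.
Proof.
move=> ab bc; apply: ge_ereal_sup => _ [P [sP Pac] <-].
have sP' : sorted <=%R P by apply: sub_sorted sP => x y /ltW.
have [lo [hi [PE s_lohi lo_b hi_b]]] := sorted_insert _ b sP'.
have Pac' x : x \in lo ++ hi -> a <= x <= c by rewrite -PE; apply: (allP Pac).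
rewrite sorted_cat_cons in s_lohi; case/andP: s_lohi => s_lo s_hi.
apply: (@le_trans _ _ (polylen gamma (lo ++ b :: hi))%:E).
  by rewrite lee_fin PE polylen_insert.
rewrite polylen_cat_cons EFinD leeD // polylen_le_curve_length //.
  apply/allP => x; rewrite mem_rcons inE => /predU1P[->|xlo]; first by rewrite ab lexx.
  have /andP[-> _] : a <= x <= c by apply: Pac'; rewrite mem_cat xlo.
  exact: (allP lo_b).
apply/allP => x; rewrite inE => /predU1P[->|xhi]; first by rewrite lexx bc.
have /andP[_ ->] : a <= x <= c by apply: Pac'; rewrite mem_cat xhi orbT.
by rewrite andbT (allP hi_b).
Qed.

Lemma polylen_join_le_curve_length {a b c} P Q : a <= b -> b <= c ->
  sorted <%R P -> all (fun x => a <= x <= b) P ->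
  sorted <%R Q -> all (fun x => b <= x <= c) Q ->
  ((polylen gamma P + polylen gamma Q)%:E <= curve_length gamma a c)%E.
Proof.
move=> ab bc sP Pab sQ Qbc; have lt_le : subrel <%R (<=%R : rel R) by move=> x y /ltW.
apply: le_trans (polylen_le_curve_length a c (P ++ b :: Q) _ _).
- rewrite lee_fin polylen_cat_cons lerD //; last exact: (polylen_insert gamma [::] b Q).
  by have := polylen_insert gamma P b [::]; rewrite cats0 cats1.
- rewrite sorted_cat_cons sorted_rcons ?(sub_sorted lt_le) //=.
    rewrite path_min_sorted ?(sub_sorted lt_le) //.
    by apply/allP => x /(allP Qbc) /andP[].
  by apply/allP => x /(allP Pab) /andP[].
apply/allP => x; rewrite mem_cat inE.
case/orP => [/(allP Pab)/andP[-> xb]|/predU1P[->|/(allP Qbc)/andP[bx ->]]].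
+ exact: le_trans xb bc.
+ by rewrite ab bc.
+ by rewrite (le_trans ab bx).
Qed.

Lemma curve_length_add_le a b c : a <= b -> b <= c ->
  (curve_length gamma a b + curve_length gamma b c <= curve_length gamma a c)%E.
Proof.
move=> ab bc.
case Lac: (curve_length gamma a c) => [l| |]; last 2 first.
- exact: leey.
- by have := curve_length_ge0 a c; rewrite Lac.
have Lab_le Q : sorted <%R Q -> all (fun x => b <= x <= c) Q ->
    (curve_length gamma a b <= (l - polylen gamma Q)%:E)%E.
  move=> sQ Qbc; apply: curve_length_le => P sP Pab.
  have := polylen_join_le_curve_length P Q ab bc sP Pab sQ Qbc.
  by rewrite Lac lee_fin; lra.
have /curve_length_bounded[p Lab _] := Lab_le [::] isT isT.
have Lbc : (curve_length gamma b c <= (l - p)%:E)%E.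
  apply: curve_length_le => Q sQ Qbc.
  by have := Lab_le Q sQ Qbc; rewrite Lab lee_fin; lra.
by rewrite Lab (le_trans (leeD2l _ Lbc)) // -EFinD lee_fin addrC subrK.
Qed.

Lemma curve_lengthD a b c : a <= b -> b <= c ->
  curve_length gamma a c = (curve_length gamma a b + curve_length gamma b c)%E.
Proof.
by move=> ab bc; apply/le_anti; rewrite curve_length_le_add ?curve_length_add_le.
Qed.

End CurveLength.

Lemma real_induction {R : realType} (a b : R) (G : R -> Prop) : a <= b -> G a ->
  (forall x, a <= x < b -> G x ->
     exists2 e, 0 < e & forall y, x < y < x + e -> y <= b -> G y) ->
  (forall x, a < x <= b -> (forall y, a <= y < x -> G y) -> G x) ->
  G b.
Proof.
move=> ab Ga step closed.
pose S := [set x | a <= x <= b /\ forall y, a <= y <= x -> G y].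
have Sa : S a.
  by split=> [|y /andP[ay ya]]; [rewrite lexx ab | rewrite (@le_anti _ _ y a) ?ay ?ya].
have supS : has_sup S by split; [exists a | exists b => x [/andP[_ ->]]].
set m := sup S.
have am : a <= m := sup_upper_bound supS Sa.
have mb : m <= b by apply: ge_sup; [exists a | move=> x [/andP[_ ->]]].
have below y : a <= y < m -> G y.
  move=> /andP[ay ym]; have my : 0 < m - y by rewrite subr_gt0.
  have [x [_ Gx] mx] := sup_adherent my supS.
  by apply: Gx; rewrite ay /=; move: mx; rewrite -/m; lra.
have Gm : G m.
  have [<-//|am'] := eqVneq a m.
  by apply: closed => //; rewrite lt_neqAle am' am mb.
have Sm : S m.
  split=> [|y /andP[ay]]; first by rewrite am mb.
  by rewrite le_eqVlt => /predU1P[->//|ym]; apply: below; rewrite ay ym.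
suff mbE : m = b by rewrite -mbE.
apply/le_anti; rewrite mb /= leNgt; apply/negP => mb'.
have amb : a <= m < b by rewrite am mb'.
have [e e0 He] := step m amb Gm.
pose y := Num.min (m + e / 2) b.
have ye : y <= m + e / 2 by rewrite ge_min lexx.
have yb : y <= b by rewrite ge_min lexx orbT.
have my : m < y by rewrite lt_min mb' andbT ltrDl divr_gt0.
have Sy : S y.
  split=> [|z /andP[az zy]].
    by rewrite yb andbT (le_trans am (ltW my)).
  have [zm|mz] := leP z m; first by apply: Sm.2; rewrite az zm.
  by apply: He; [rewrite mz /=|]; lra.
by have := sup_upper_bound supS Sy; rewrite -/m leNgt my.
Qed.

Lemma mem_itv_between {R : realType} {I : interval R} {a b x : R} :
  a \in I -> b \in I -> a <= x <= b -> x \in I.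
Proof. by move=> aI bI /(@interval_is_interval R I a b aI bI x). Qed.

Section CurveRegularity.
Context {R : realType} {d : nat} {I : interval R} {gamma : R -> 'rV[R]_d}.

Lemma right_deriv_enorm tau v : right_deriv I gamma tau v ->
  forall e, 0 < e -> exists2 dl, 0 < dl & forall h, 0 < h < dl -> tau + h \in I ->
    enorm (gamma (tau + h) - gamma tau - h *: v) <= e * h.
Proof.
move=> /cvgrPdist_lt dv e e0.
have e'0 : 0 < e / (d%:R + 1) by rewrite divr_gt0 // ltr_wpDl.
move: (dv _ e'0); rewrite !near_withinE => /nbhs_ballP[dl dl0 H].
exists dl => // h /andP[h0 hdl] hI.
have /H : ball 0 dl h by rewrite /ball /= sub0r normrN gtr0_norm.
move=> /(_ h0 hI) /enorm_le_of_mx_norm; rewrite enorm_distC => hv.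
have -> : gamma (tau + h) - gamma tau - h *: v
    = h *: (h^-1 *: (gamma (tau + h) - gamma tau) - v).
  by rewrite scalerBr scalerA mulfV ?gt_eqF // scale1r.
by rewrite enormZ gtr0_norm // mulrC ler_wpM2r // ltW.
Qed.

Lemma continuous_within_enorm x : {within [set` I], continuous gamma} -> x \in I ->
  forall e, 0 < e -> exists2 dl, 0 < dl & forall y, `|x - y| < dl -> y \in I ->
    enorm (gamma x - gamma y) <= e.
Proof.
move=> /subspace_continuousP cont xI e e0.
have e'0 : 0 < e / (d%:R + 1) by rewrite divr_gt0 // ltr_wpDl.
move: (cont x xI) => /cvgrPdist_lt/(_ _ e'0).
rewrite near_withinE => /nbhs_ballP[dl dl0 H].
by exists dl => // y xy yI; apply/enorm_le_of_mx_norm/H.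
Qed.

End CurveRegularity.

Section EelDistance.
Context {R : realType} {d : nat} {lam : R} {I : interval R}.
Context {gamma gd : R -> 'rV[R]_d} {t1 : R}.
Hypotheses (lam_ge : -1 <= lam) (lam_le : lam <= 1) (t1I : t1 \in I).
Hypothesis gamma_cont : {within [set` I], continuous gamma}.
Hypothesis gd_deriv : {in I, forall tau, right_deriv I gamma tau (gd tau)}.
Hypothesis gd_eel : {in I &, forall tau t, t < tau ->
  edot (gd tau) (gamma t - gamma tau) <= lam * enorm (gd tau) * enorm (gamma t - gamma tau)}.

Let dist u := enorm (gamma t1 - gamma u).

Lemma dist_local_step m e : t1 <= m -> m \in I -> 0 < e ->
  exists2 dl, 0 < dl & forall y, m < y < m + dl -> y \in I ->
    dist m - dist y <= lam * enorm (gamma m - gamma y) + e * (y - m).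
Proof.
move=> t1m mI e0; have e2 : 0 < e / 2 by rewrite divr_gt0.
have /right_deriv_enorm/(_ _ e2)[dl dl0 Hd] := gd_deriv m mI.
exists dl => // y /andP[my ymdl] yI; set h := y - m.
have yE : y = m + h by rewrite /h addrC subrK.
have h0 : 0 < h by rewrite subr_gt0.
have /Hd : 0 < h < dl by rewrite h0 /=; lra.
rewrite -yE => /(_ yI) Dh.
have eel : edot (gd m) (gamma t1 - gamma m) <=
    lam * enorm (gd m) * enorm (gamma t1 - gamma m).
  move: t1m; rewrite le_eqVlt => /predU1P[<-|t1m].
    by rewrite subrr edot0r enorm0 mulr0.
  exact: gd_eel.
have := eel_step_estimate lam h (gd m) (gamma t1 - gamma m) (gamma y - gamma m)
  lam_ge lam_le (ltW h0) eel.
rewrite opprB addrA subrK (enorm_distC (gamma y)) -/(dist m) -/(dist y); lra.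
Qed.

Lemma dist_sub_le u y :
  dist u - dist y <= lam * enorm (gamma u - gamma y) + 2 * enorm (gamma u - gamma y).
Proof.
have := lerB_enorm (gamma t1 - gamma u) (gamma t1 - gamma y).
rewrite opprB (addrC (gamma t1 - gamma u)) addrA subrK (enorm_distC (gamma y)).
have : 0 <= (1 + lam) * enorm (gamma u - gamma y).
  by apply: mulr_ge0; [have := lam_ge; lra | exact: enorm_ge0].
rewrite -/(dist u) -/(dist y); lra.
Qed.

(* [chain_to a c eta u]: some chain from [a] to [u] loses at most [lam] times its
   length, up to [c * (u - a)] (the right-derivative errors) and [eta] (the
   left-continuity errors). *)
Definition chain_to a c eta u := exists Q, [/\ path <=%R a Q, last a Q = u &
  dist a - dist u <= lam * polylen gamma (a :: Q) + c * (u - a) + eta].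

Lemma chain_to_extend a c eta eta' u y : chain_to a c eta u -> u <= y ->
  dist u - dist y <= lam * enorm (gamma u - gamma y) + c * (y - u) + eta' ->
  chain_to a c (eta + eta') y.
Proof.
move=> [Q [aQ lQ HQ]] uy Huy; exists (rcons Q y).
by rewrite rcons_path aQ lQ uy last_rcons polylen_rcons lQ; split => //; lra.
Qed.

Lemma dist_chain a b e : t1 <= a -> a <= b -> a \in I -> b \in I -> 0 < e ->
  exists Q, [/\ path <=%R a Q, last a Q = b &
                dist a - dist b <= lam * polylen gamma (a :: Q) + e].
Proof.
move=> t1a ab aI bI e0.
have inI x : a <= x <= b -> x \in I := mem_itv_between aI bI.
(* [c * (b - a) <= e / 2], also when [a = b]. *)
pose c := e / (2 * (b - a + 1)).
have ba1 : 0 < b - a + 1 by rewrite ltr_wpDl ?subr_ge0.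
have c0 : 0 < c by rewrite divr_gt0 ?mulr_gt0.
have cba : c * (b - a) <= e / 2.
  by rewrite /c mulrAC ler_pdivrMr ?mulr_gt0 //; lra.
have Gb : forall eta, 0 < eta -> chain_to a c eta b.
  apply: (@real_induction _ a b (fun u => forall eta, 0 < eta -> chain_to a c eta u) ab).
  - by move=> eta eta0; exists [::]; split => //; rewrite polylen1; lra.
  - move=> x /andP[ax xb] Gx.
    have xI : x \in I by apply: inI; rewrite ax ltW.
    have [dl dl0 Hs] := dist_local_step x c (le_trans t1a ax) xI c0.
    exists dl => // y /andP[xy ydl] yb eta eta0; rewrite -[eta]addr0.
    apply: chain_to_extend (Gx _ eta0) (ltW xy) _; rewrite addr0.
    by apply: Hs; [rewrite xy | apply: inI; rewrite yb andbT (le_trans ax (ltW xy))].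
  - move=> x /andP[ax xb] G_below eta eta0; have eta4 : 0 < eta / 4 by rewrite divr_gt0.
    have xI : x \in I by apply: inI; rewrite xb andbT ltW.
    have [dl dl0 Hc] := continuous_within_enorm x gamma_cont xI _ eta4.
    pose y := Num.max a (x - dl / 2).
    have ay : a <= y by rewrite le_max lexx.
    have yx : y < x by rewrite gt_max ax /=; lra.
    have xy_dl : `|x - y| < dl.
      have : x - dl / 2 <= y by rewrite le_max lexx orbT.
      by rewrite ltr_norml => ?; apply/andP; split; lra.
    have yI : y \in I by apply: inI; rewrite ay (le_trans (ltW yx) xb).
    rewrite [eta]splitr; apply: chain_to_extend (G_below y _ _ _) (ltW yx) _.
    + by rewrite ay yx.
    + by rewrite divr_gt0.
    have := Hc y xy_dl yI; rewrite enorm_distC.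
    have := dist_sub_le y x.
    have : 0 <= c * (x - y) by rewrite mulr_ge0 ?subr_ge0 ?ltW.
    lra.
have e2 : 0 < e / 2 by rewrite divr_gt0.
by have [Q [aQ lQ HQ]] := Gb _ e2; exists Q; split => //; lra.
Qed.

Lemma dist_sub_le_chord a b : lam <= 0 -> t1 <= a -> a <= b -> a \in I -> b \in I ->
  dist a - dist b <= lam * enorm (gamma a - gamma b).
Proof.
move=> lam0 t1a ab aI bI; apply/ler_addgt0Pr => e e0.
have [Q [_ lQ HQ]] := dist_chain a b e t1a ab aI bI e0.
have := chord_le_polylen gamma a Q; rewrite lQ => /(ler_wnM2l lam0).
lra.
Qed.

Lemma polylen_le_dist_sub s t P : lam <= 0 -> t1 <= s -> s <= t -> s \in I -> t \in I ->
  sorted <%R P -> all (fun x => s <= x <= t) P ->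
  - lam * polylen gamma P <= dist t - dist s.
Proof.
move=> lam0 t1s st sI tI sP Pst.
pose D x := (t1 <= x) && (x \in I).
have D_chord : {in D &, forall a b,
    a <= b -> dist a - dist b <= lam * enorm (gamma a - gamma b)}.
  by move=> a b /andP[t1a aI] /andP[_ bI] ab; apply: dist_sub_le_chord.
have sPt : path <=%R s (rcons P t).
  rewrite rcons_path path_min_sorted; last by apply/allP => x /(allP Pst)/andP[].
  rewrite (sub_sorted _ sP) => [/=|x y /ltW //]; have := mem_last s P; rewrite inE.
  by case/predU1P => [->//|/(allP Pst)/andP[]].
have sD : D s by rewrite /D t1s sI.
have Pt_D : all D (rcons P t).
  apply/allP => x; rewrite mem_rcons inE.
  case/predU1P => [->|/(allP Pst)/andP[sx xt]]; first by rewrite /D (le_trans t1s st) tI.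
  by rewrite /D (le_trans t1s sx) (mem_itv_between sI tI) // sx xt.
have := polylen_telescope gamma dist lam D D_chord s (rcons P t) sPt sD Pt_D.
rewrite last_rcons => tel.
have := polylen_insert gamma P t [::]; rewrite cats0 cats1 => Pt.
have := polylen_insert gamma [::] s (rcons P t) => /= /(le_trans Pt) PsPt.
have nlam0 : 0 <= - lam by rewrite oppr_ge0.
have := ler_wpM2l nlam0 PsPt; lra.
Qed.

Lemma dist_le_curve_length s t : t1 <= s -> s <= t -> s \in I -> t \in I ->
  ((dist s)%:E <= (dist t)%:E + lam%:E * curve_length gamma s t)%E.
Proof.
move=> t1s st sI tI; have [lam0|lam0] := leP 0 lam.
  apply/lee_addgt0Pr => e e0.
  have [Q [sQ lQ HQ]] := dist_chain s t e t1s st sI tI e0.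
  have Qst : all (fun x => s <= x <= t) (s :: Q).
    have := path_le_last s Q sQ; rewrite lQ => Qt.
    apply/allP => x xsQ; have xt : x <= t := allP Qt x xsQ.
    rewrite xt andbT.
    by move: xsQ; rewrite inE => /predU1P[->|/(allP (order_path_min le_trans sQ))].
  have := polylen_le_curve_length gamma s t (s :: Q) sQ Qst.
  move=> PL; apply: (@le_trans _ _ (dist t + lam * polylen gamma (s :: Q) + e)%:E).
    by rewrite lee_fin; lra.
  by rewrite !EFinD EFinM leeD2r // leeD2l // lee_wpmul2l ?lee_fin.
have nlam0 : 0 < - lam by rewrite oppr_gt0.
have /curve_length_bounded[l -> lle] : (curve_length gamma s t <= ((dist t - dist s) / - lam)%:E)%E.
  apply: curve_length_le => P sP Pst; rewrite ler_pdivlMr // mulrC.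
  exact: polylen_le_dist_sub (ltW lam0) t1s st sI tI sP Pst.
rewrite -EFinM -EFinD lee_fin; rewrite ler_pdivlMr // in lle; lra.
Qed.

End EelDistance.

Theorem lemma4p1 (R : realType) (d : nat) (lam : R) (I : interval R)
    (gamma : R -> 'rV[R]_d) :
  -1 <= lam -> lam < 1 -> eel lam I gamma ->
  forall t1 s t : R, t1 \in I -> s \in I -> t \in I -> t1 <= s -> s <= t ->
    ((enorm (gamma t1 - gamma s))%:E + lam%:E * curve_length gamma t1 s
      <= (enorm (gamma t1 - gamma t))%:E + lam%:E * curve_length gamma t1 t)%E.
Proof.
move=> lam_ge lam_lt [gamma_cont [gd eel_gd]] t1 s t t1I sI tI t1s st.
have gd_deriv : {in I, forall tau, right_deriv I gamma tau (gd tau)}.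
  by move=> tau /eel_gd[].
have gd_eel : {in I &, forall tau u, u < tau ->
    edot (gd tau) (gamma u - gamma tau) <=
    lam * enorm (gd tau) * enorm (gamma u - gamma tau)}.
  by move=> tau u /eel_gd[_ _ eel_tau] uI; apply: eel_tau.
rewrite (curve_lengthD gamma _ _ _ t1s st) ge0_muleDr ?curve_length_ge0 //.
rewrite addeCA [leLHS]addeC; apply: leeD2l.
exact: dist_le_curve_length lam_ge (ltW lam_lt) t1I gamma_cont gd_deriv gd_eel s t t1s st sI tI.
Qed.
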